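(* Let $\{x_k\}$ be generated by the Subgradient-InexP method with Polyak's stepsize rule, under the standing assumptions (in particular $\Omega^*\neq\varnothing$). Then for every $x\in\Omega^*$ and every $k=0,1,\dots$, $$\|x_{k+1}-x\|^2\le\|x_k-x\|^2-\underline\beta\,\frac{[f(x_k)-f^*]^2}{\|s_k\|^2}.$$
   Context: Problem: minimize a convex $f:\mathbb{R}^n\to\mathbb{R}$ over a nonempty closed convex $C\subset\mathbb{R}^n$; $f^*:=\inf_{x\in C}f(x)$, $\Omega^*$ the set of minimizers. For $\epsilon\ge0$, $\partial_\epsilon f(x):=\{s: f(y)\ge f(x)+\langle s,y-x\rangle-\epsilon\ \forall y\}$. Relative error tolerance function: any $\varphi_{\gamma,\theta,\lambda}:(\mathbb{R}^n)^3\to[0,\infty)$ with $\varphi_{\gamma,\theta,\lambda}(u,v,w)\le\gamma\|v-u\|^2+\theta\|w-v\|^2+\lambda\|w-u\|^2$; for $u\in C$, $\mathcal{P}_C(\varphi_{\gamma,\theta,\lambda},u,v):=\{w\in C:\langle v-w,z-w\rangle\le\varphi_{\gamma,\theta,\lambda}(u,v,w)\ \forall z\in C\}$. Subgradient-InexP method: $x_0\in C$; at iteration $k$, if $0\in\partial f(x_k)$ stop; otherwise choose nonzero $s_k\in\partial_{\epsilon_k}f(x_k)$, stepsize $t_k>0$, and $x_{k+1}\in\mathcal{P}_C(\varphi_{\gamma_k,\theta_k,\lambda_k},x_k,x_k-t_ks_k)$. Standing assumptions: $\gamma_k\in[0,\bar\gamma)$, $\theta_k\in[0,\bar\theta)$,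 $\lambda_k\in[0,\bar\lambda)$ with $\bar\gamma\ge0$, $\bar\theta,\bar\lambda\in[0,1/2)$; the sequence is infinite. Let $\nu:=\frac{1+2\bar\gamma}{1-2\bar\lambda}$. Polyak's stepsize rule: $\Omega^*\neq\varnothing$, $f^*>-\infty$ known; $\mu\ge0$, $\underline\beta>0$, $\bar\beta>0$; $\{\epsilon_k\}$ nonincreasing, $0<\underline\beta\le\beta_k\le\bar\beta<\frac{1}{2\mu+\nu}$ and $0<\epsilon_k\le\mu\beta_k[f(x_k)-f^*]$ for all $k$; $t_k:=\beta_k\frac{f(x_k)-f^*}{\|s_k\|^2}$. *)

From HB Require Import structures.
From mathcomp Require Import all_boot all_order all_algebra.
From mathcomp Require Import all_classical all_reals all_analysis.
Set Implicit Arguments. Unset Strict Implicit. Unset Printing Implicit Defensive.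
Import Order.TTheory GRing.Theory Num.Theory.
Import numFieldTopology.Exports.
Local Open Scope ring_scope.
Local Open Scope classical_set_scope.

Section Defs.
Variables (R : realType) (n : nat).
Notation vec := 'rV[R]_n.

Definition dotp (u v : vec) : R := \sum_(i < n) u ord0 i * v ord0 i.
Definition sqnorm (u : vec) : R := dotp u u.

Definition cvx_fun (f : vec -> R) : Prop :=
  forall (x y : vec) (a : R), 0 <= a -> a <= 1 ->
    f (a *: x + (1 - a) *: y) <= a * f x + (1 - a) * f y.

Definition cvx_set (C : set vec) : Prop :=
  forall (x y : vec) (a : R), C x -> C y -> 0 <= a -> a <= 1 ->
    C (a *: x + (1 - a) *: y).

Definition fstar (f : vec -> R) (C : set vec) : R := inf [set f x | x in C].

Definition Omega_star (f : vec -> R) (C : set vec) : set vec :=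
  [set x | C x /\ forall y, C y -> f x <= f y].

Definition eps_subdiff (f : vec -> R) (eps : R) (x : vec) : set vec :=
  [set s | forall y : vec, f y >= f x + dotp s (y - x) - eps].

Definition rel_err_tol (phi : vec -> vec -> vec -> R) (gamma theta lambda : R) : Prop :=
  forall u v w : vec, 0 <= phi u v w /\
    phi u v w <= gamma * sqnorm (v - u) + theta * sqnorm (w - v) + lambda * sqnorm (w - u).

Definition inexact_proj (C : set vec) (phi : vec -> vec -> vec -> R) (u v : vec) : set vec :=
  [set w | C w /\ forall z, C z -> dotp (v - w) (z - w) <= phi u v w].

End Defs.

From HB Require Import structures.
From mathcomp Require Import all_boot all_order all_algebra.
From mathcomp Require Import all_classical all_reals all_analysis.
From mathcomp Require Import ring lra.
Set Implicit Arguments. Unset Strict Implicit. Unset Printing Implicit Defensive.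
Import Order.TTheory GRing.Theory Num.Theory.
Import numFieldTopology.Exports.
Local Open Scope ring_scope.
Local Open Scope classical_set_scope.

(* Write u := x_k, v := u - t_k s_k, w := x_{k+1}, z a minimizer.
   1. Three-point inequality: since w is an inexact projection of v onto C,
      |w - z|^2 <= |v - z|^2 - |w - v|^2 + 2 phi(u, v, w) for every z in C.
   2. Taking z = u and using the relative error bound on phi gives the
      displacement bound (1 - 2 lambda)|w - u|^2 <= (1 + 2 gamma)|v - u|^2.
   3. Combining 1 and 2 yields |w - z|^2 <= |v - z|^2 + (K - 1)|v - u|^2 with
      K = (1 + 2 gamma)/(1 - 2 lambda) <= nu; expanding v = u - t s gives the
      basic Fejer-type inequality
      |w - z|^2 <= |u - z|^2 - 2 t <s, u - z> + nu t^2 |s|^2.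
   4. The eps-subgradient inequality bounds <s, u - z> from below by
      f(u) - f_opt - eps, and a scalar computation with the Polyak stepsize
      t = beta (f(u) - f_opt)/|s|^2 and beta (2 mu + nu) <= 1 turns the right-hand
      side into |u - z|^2 - beta_low (f(u) - f_opt)^2/|s|^2.
   The file first develops the inner-product algebra, then steps 1-3 for an
   arbitrary inexact projection, then step 4, and finally the theorem. *)

Section InnerProduct.
Variables (R : realType) (n : nat).
Implicit Types u v w : 'rV[R]_n.

Lemma dotpC u v : dotp u v = dotp v u.
Proof. by apply: eq_bigr => i _; rewrite mulrC. Qed.

Lemma dotpDl u v w : dotp (u + v) w = dotp u w + dotp v w.
Proof. by rewrite /dotp -big_split; apply: eq_bigr => i _; rewrite mxE mulrDl. Qed.

Lemma dotpZl (a : R) u w : dotp (a *: u) w = a * dotp u w.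
Proof. by rewrite /dotp mulr_sumr; apply: eq_bigr => i _; rewrite mxE mulrA. Qed.

Lemma dotpNl u w : dotp (- u) w = - dotp u w.
Proof. by rewrite -scaleN1r dotpZl mulN1r. Qed.

Lemma dotpNr u w : dotp w (- u) = - dotp w u.
Proof. by rewrite dotpC dotpNl dotpC. Qed.

Lemma sqnormD u v : sqnorm (u + v) = sqnorm u + 2 * dotp u v + sqnorm v.
Proof.
rewrite /sqnorm dotpDl !(dotpC _ (u + v)) !dotpDl (dotpC v u); ring.
Qed.

Lemma sqnormN u : sqnorm (- u) = sqnorm u.
Proof. by rewrite /sqnorm dotpNl dotpNr opprK. Qed.

Lemma sqnormZ (a : R) u : sqnorm (a *: u) = a ^+ 2 * sqnorm u.
Proof. by rewrite /sqnorm dotpZl dotpC dotpZl mulrA -expr2. Qed.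

Lemma sqnorm_ge0 u : 0 <= sqnorm u.
Proof. by apply: sumr_ge0 => i _; rewrite -expr2 sqr_ge0. Qed.

Lemma sqnorm_gt0 u : u != 0 -> 0 < sqnorm u.
Proof.
move=> u0; rewrite lt_def sqnorm_ge0 andbT; apply: contra u0 => /eqP u2_0.
have sq_ge0 (j : 'I_n) : true -> 0 <= u ord0 j * u ord0 j.
  by move=> _; rewrite -expr2 sqr_ge0.
apply/eqP/rowP => i; rewrite mxE.
have ui0 : u ord0 i * u ord0 i = 0 by apply: (psumr_eq0P sq_ge0 u2_0).
by apply/eqP; rewrite -[_ == 0]orbb -mulf_eq0 ui0.
Qed.

Lemma sqnorm_step u z s (t : R) :
  sqnorm (u - t *: s - z) = sqnorm (u - z) - 2 * t * dotp s (u - z) + t ^+ 2 * sqnorm s.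
Proof.
have -> : u - t *: s - z = (u - z) + - (t *: s) by rewrite addrAC.
by rewrite sqnormD sqnormN sqnormZ dotpNr dotpC dotpZl; ring.
Qed.

End InnerProduct.

Section InexactProjection.
Variables (R : realType) (n : nat).
Variables (C : set 'rV[R]_n) (phi : 'rV[R]_n -> 'rV[R]_n -> 'rV[R]_n -> R).
Variables (u v w : 'rV[R]_n).
Hypothesis w_proj : inexact_proj C phi u v w.

Lemma inexact_proj_three_point z : C z ->
  sqnorm (w - z) <= sqnorm (v - z) - sqnorm (w - v) + 2 * phi u v w.
Proof.
move=> Cz; have [_ /(_ z Cz) vw_angle] := w_proj.
have split_vz : v - z = (v - w) + (w - z) by rewrite addrA subrK.
have wv_sym : sqnorm (w - v) = sqnorm (v - w) by rewrite -sqnormN opprB.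
have angle_sym : dotp (v - w) (z - w) = - dotp (v - w) (w - z).
  by rewrite -dotpNr opprB.
rewrite split_vz (sqnormD (v - w)) wv_sym; rewrite angle_sym in vw_angle; lra.
Qed.

Variables (gamma theta lambda : R).
Hypothesis phi_tol : rel_err_tol phi gamma theta lambda.

(* Error bound on phi at the iterate, with the nonpositive |w - v|^2 part dropped. *)
Lemma inexact_proj_err z : theta <= 1/2 -> C z ->
  sqnorm (w - z) <= sqnorm (v - z) + 2 * gamma * sqnorm (v - u)
                    + 2 * lambda * sqnorm (w - u).
Proof.
move=> theta_le Cz; have := inexact_proj_three_point Cz.
have [_ phi_le] := phi_tol u v w.
have : 0 <= (1 - 2 * theta) * sqnorm (w - v).
  by apply: mulr_ge0; [lra | exact: sqnorm_ge0].
lra.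
Qed.

Lemma inexact_proj_displacement : theta <= 1/2 -> C u ->
  (1 - 2 * lambda) * sqnorm (w - u) <= (1 + 2 * gamma) * sqnorm (v - u).
Proof. by move=> theta_le Cu; have := inexact_proj_err theta_le Cu; lra. Qed.

End InexactProjection.

(* The factor (1 + 2 gamma)/(1 - 2 lambda) by which an inexact projection may
   enlarge the step; nu in the paper is its value at the upper bounds. *)
Definition growth_factor (R : realType) (gamma lambda : R) : R :=
  (1 + 2 * gamma) / (1 - 2 * lambda).

Lemma growth_factor_le (R : realType) (gamma lambda gamma' lambda' : R) :
  0 <= gamma <= gamma' -> lambda <= lambda' < 1/2 ->
  growth_factor gamma lambda <= growth_factor gamma' lambda'.
Proof.
move=> /andP[gamma0 gamma_le] /andP[lambda_le lambda'_lt].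
have den_gt0 : 0 < 1 - 2 * lambda' by lra.
have den'_gt0 : 0 < 1 - 2 * lambda by lra.
rewrite /growth_factor ler_pdivrMr // mulrAC ler_pdivlMr //.
have num_le : 1 + 2 * gamma <= 1 + 2 * gamma' by lra.
have den_le : 1 - 2 * lambda' <= 1 - 2 * lambda by lra.
have := ler_wpM2r (ltW den_gt0) num_le.
have num'_ge0 : 0 <= 1 + 2 * gamma' by lra.
have := ler_wpM2l num'_ge0 den_le.
lra.
Qed.

(* Combining the three-point inequality with the displacement bound: the
   projection error costs at most (K - 1) times the squared step length. *)
Lemma inexact_proj_fejer (R : realType) (n : nat) (C : set 'rV[R]_n)
    (phi : 'rV[R]_n -> 'rV[R]_n -> 'rV[R]_n -> R) (gamma theta lambda : R)
    (u v w z : 'rV[R]_n) :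
  rel_err_tol phi gamma theta lambda -> theta <= 1/2 -> 0 <= lambda < 1/2 ->
  inexact_proj C phi u v w -> C u -> C z ->
  sqnorm (w - z) <= sqnorm (v - z) + (growth_factor gamma lambda - 1) * sqnorm (v - u).
Proof.
move=> phi_tol theta_le /andP[lambda0 lambda_lt] w_proj Cu Cz.
have den_gt0 : 0 < 1 - 2 * lambda by lra.
have disp : sqnorm (w - u) <= growth_factor gamma lambda * sqnorm (v - u).
  rewrite /growth_factor mulrAC ler_pdivlMr //.
  have := inexact_proj_displacement w_proj phi_tol theta_le Cu; lra.
have K_id : (growth_factor gamma lambda - 1) * sqnorm (v - u) =
    2 * gamma * sqnorm (v - u)
    + 2 * lambda * (growth_factor gamma lambda * sqnorm (v - u)).
  by rewrite /growth_factor; field; rewrite gt_eqF.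
have := inexact_proj_err w_proj phi_tol theta_le Cz.
have lambda2_ge0 : 0 <= 2 * lambda by lra.
have := ler_wpM2l lambda2_ge0 disp.
lra.
Qed.

Lemma inexact_subgradient_step (R : realType) (n : nat) (C : set 'rV[R]_n)
    (phi : 'rV[R]_n -> 'rV[R]_n -> 'rV[R]_n -> R) (gamma theta lambda nu t : R)
    (u s w z : 'rV[R]_n) :
  rel_err_tol phi gamma theta lambda -> theta <= 1/2 -> 0 <= lambda < 1/2 ->
  growth_factor gamma lambda <= nu ->
  inexact_proj C phi u (u - t *: s) w -> C u -> C z ->
  sqnorm (w - z) <= sqnorm (u - z) - 2 * t * dotp s (u - z) + nu * (t ^+ 2 * sqnorm s).
Proof.
move=> phi_tol theta_le lambda_rng K_le w_proj Cu Cz.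
have step_len : sqnorm (u - t *: s - u) = t ^+ 2 * sqnorm s.
  by rewrite addrAC subrr add0r sqnormN sqnormZ.
have := inexact_proj_fejer phi_tol theta_le lambda_rng w_proj Cu Cz.
rewrite step_len sqnorm_step.
have K1_le : growth_factor gamma lambda - 1 <= nu - 1 by lra.
have := ler_wpM2r (mulr_ge0 (sqr_ge0 t) (sqnorm_ge0 s)) K1_le.
lra.
Qed.

Lemma eps_subdiff_inner_lb (R : realType) (n : nat) (f : 'rV[R]_n -> R)
    (eps : R) (u s z : 'rV[R]_n) :
  eps_subdiff f eps u s -> f u - f z - eps <= dotp s (u - z).
Proof.
move=> /(_ z) s_sub; rewrite -(opprB u z) dotpNr in s_sub; lra.
Qed.

Lemma fstar_minimizer (R : realType) (n : nat) (f : 'rV[R]_n -> R)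
    (C : set 'rV[R]_n) (xs : 'rV[R]_n) :
  Omega_star f C xs -> fstar f C = f xs.
Proof.
move=> [Cxs xs_min]; apply/eqP; rewrite eq_le; apply/andP; split.
  apply: ge_inf; last by exists xs.
  by exists (f xs) => _ [y Cy <-]; exact: xs_min.
by apply: lb_le_inf; [exists (f xs), xs | move=> _ [y Cy <-]; exact: xs_min].
Qed.

Lemma iterates_in_C (R : realType) (n : nat) (C : set 'rV[R]_n)
    (phi : nat -> 'rV[R]_n -> 'rV[R]_n -> 'rV[R]_n -> R) (x v : nat -> 'rV[R]_n) :
  C (x 0%N) -> (forall k, inexact_proj C (phi k) (x k) (v k) (x k.+1)) ->
  forall k, C (x k).
Proof. by move=> Cx0 x_proj; elim=> [//|k _]; case: (x_proj k). Qed.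

Lemma polyak_decrease (R : realType) (d S t g eps beta mu nu blow : R) :
  0 < S -> 0 < t -> t = beta * d / S -> eps <= mu * beta * d -> d - eps <= g ->
  0 <= blow <= beta -> beta * (2 * mu + nu) <= 1 ->
  - 2 * t * g + nu * (t ^+ 2 * S) <= - blow * (d ^+ 2 / S).
Proof.
move=> S_gt0 t_gt0 t_def eps_le g_ge /andP[blow0 blow_le] beta_le.
have E_ge0 : 0 <= d ^+ 2 / S by rewrite divr_ge0 ?sqr_ge0 // ltW.
have tg_ge : t * (d - mu * beta * d) <= t * g.
  by apply: ler_wpM2l; [exact: ltW | lra].
have lin_E : t * (d - mu * beta * d) = beta * (1 - mu * beta) * (d ^+ 2 / S).
  by rewrite t_def; field; rewrite gt_eqF.
have quad_E : t ^+ 2 * S = beta * beta * (d ^+ 2 / S).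
  by rewrite t_def; field; rewrite gt_eqF.
have slack1 : 0 <= (d ^+ 2 / S) * (beta * (1 - beta * (2 * mu + nu))).
  by apply/mulr_ge0/mulr_ge0 => //; lra.
have slack2 : 0 <= (d ^+ 2 / S) * (beta - blow) by apply: mulr_ge0 => //; lra.
rewrite quad_E; lra.
Qed.

Theorem mainTheorem7 (R : realType) (n : nat)
  (f : 'rV[R]_n -> R) (C : set 'rV[R]_n)
  (x : nat -> 'rV[R]_n) (s : nat -> 'rV[R]_n)
  (eps t beta gamma theta lambda : nat -> R)
  (phi : nat -> 'rV[R]_n -> 'rV[R]_n -> 'rV[R]_n -> R)
  (gbar thbar lbar mu blow bhigh : R) :
  (* problem data *)
  cvx_fun f -> C !=set0 -> closed C -> cvx_set C ->
  (* standing assumptions on the tolerances *)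
  0 <= gbar -> 0 <= thbar < 1/2 -> 0 <= lbar < 1/2 ->
  (forall k, 0 <= gamma k < gbar) ->
  (forall k, 0 <= theta k < thbar) ->
  (forall k, 0 <= lambda k < lbar) ->
  (forall k, rel_err_tol (phi k) (gamma k) (theta k) (lambda k)) ->
  (* Subgradient-InexP iteration, infinite sequence *)
  C (x 0%N) ->
  (forall k, ~ eps_subdiff f 0 (x k) 0) ->
  (forall k, s k != 0 /\ eps_subdiff f (eps k) (x k) (s k)) ->
  (forall k, 0 < t k) ->
  (forall k, inexact_proj C (phi k) (x k) (x k - t k *: s k) (x k.+1)) ->
  (* Polyak's stepsize rule *)
  Omega_star f C !=set0 ->
  0 <= mu -> 0 < blow -> 0 < bhigh ->
  (forall k, eps k.+1 <= eps k) ->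
  (forall k, blow <= beta k /\ beta k <= bhigh) ->
  bhigh < 1 / (2 * mu + (1 + 2 * gbar) / (1 - 2 * lbar)) ->
  (forall k, 0 < eps k /\ eps k <= mu * beta k * (f (x k) - fstar f C)) ->
  (forall k, t k = beta k * (f (x k) - fstar f C) / sqnorm (s k)) ->
  (* conclusion *)
  forall xs, Omega_star f C xs -> forall k : nat,
    sqnorm (x k.+1 - xs) <=
      sqnorm (x k - xs) - blow * ((f (x k) - fstar f C) ^+ 2 / sqnorm (s k)).
Proof.
move=> _ _ _ _ gbar0 /andP[_ thbar_lt] /andP[_ lbar_lt] gamma_rng theta_rng
  lambda_rng phi_tol Cx0 _ s_sub t_pos x_proj _ mu0 blow0 _ _ beta_rng bhigh_lt
  eps_rng t_polyak xs xs_opt k.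
have [Cxs _] := xs_opt.
rewrite (fstar_minimizer xs_opt) in eps_rng t_polyak *.
have [s_nz s_eps] := s_sub k.
have [blow_le beta_le] := beta_rng k.
have /andP[gamma0 gamma_lt] := gamma_rng k.
have /andP[_ theta_lt] := theta_rng k.
have /andP[lambda0 lambda_lt] := lambda_rng k.
set nu := growth_factor gbar lbar.
have K_le : growth_factor (gamma k) (lambda k) <= nu.
  by apply: growth_factor_le; apply/andP; split; lra.
have nu_gt0 : 0 < nu by rewrite divr_gt0 //; lra.
have beta_nu : beta k * (2 * mu + nu) <= 1.
  have c_gt0 : 0 < 2 * mu + nu by lra.
  have bhigh_c : bhigh * (2 * mu + nu) < 1 by rewrite -ltr_pdivlMr.
  have := ler_wpM2r (ltW c_gt0) beta_le; lra.
have theta_le : theta k <= 1/2 by lra.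
have lambda_k_rng : 0 <= lambda k < 1/2 by apply/andP; split; lra.
have := inexact_subgradient_step (phi_tol k) theta_le lambda_k_rng K_le (x_proj k)
  (iterates_in_C Cx0 x_proj k) Cxs.
have [_ eps_le] := eps_rng k.
have blow_rng : 0 <= blow <= beta k by apply/andP; split; lra.
have := polyak_decrease (sqnorm_gt0 s_nz) (t_pos k) (t_polyak k) eps_le
  (eps_subdiff_inner_lb _ s_eps) blow_rng beta_nu.
lra.
Qed.
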